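(* Let $N\in\mathbb{N}$, $T>0$, $\underline t\ge0$, $\overline t=\underline t+NT$, $t_k=\underline t+kT$, let $\mathbf x_0,\dots,\mathbf x_N\in\mathbb{R}^n$ and let $\mathbf x_d$ be the associated Bézier trajectory with Bézier curves $r_k$ and control points $(\boldsymbol\zeta_k)_i$, $(\xi_k)_{n,i}$ (context). Let $\alpha,\beta\ge0$, $u_{\max}>0$, and let $\overline{\mathbf x}_0,\dots,\overline{\mathbf x}_{N-1}\in\mathcal X$. Suppose that for each $k=0,\dots,N-1$ there exists $\mathbf s_k\in\mathbb{R}^2_{\ge0}$ such that, for all $i=0,\dots,2n-1$, $$\begin{bmatrix}\|(\boldsymbol\zeta_k)_i-\overline{\mathbf x}_k\|_2\\ |(\xi_k)_{n,i}-f(\overline{\mathbf x}_k)|\end{bmatrix}\le\mathbf s_k\ \text{(elementwise)},\qquad \tfrac12\mathbf s_k^\top M_{\alpha,\beta}\mathbf s_k+N_{\alpha,\beta}(\overline{\mathbf x}_k)^\top\mathbf s_k+\Gamma_{\alpha,\beta}(\overline{\mathbf x}_k)\le u_{\max}.$$ Then for every $k$ and every $t\in[t_k,t_{k+1})$, $$\tfrac12\boldsymbol\sigma_{\mathbf x_d}(t)^\top M_{\alpha,\beta}\boldsymbol\sigma_{\mathbf x_d}(t)+N_{\alpha,\beta}(\overline{\mathbf x}_k)^\top\boldsymbol\sigma_{\mathbf x_d}(t)+\Gamma_{\alpha,\beta}(\overline{\mathbf x}_k)\le u_{\max},$$ where $\boldsymbol\sigma_{\mathbf x_d}(t)=\big(\|\mathbf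 x_d(t)-\overline{\mathbf x}_k\|_2,\ |r_k^{(n)}(t-t_k)-f(\overline{\mathbf x}_k)|\big)^\top$ for $t\in[t_k,t_{k+1})$ (note $r_k^{(n)}(t-t_k)$ is the last component of $\dot{\mathbf x}_d(t)$, right derivative at $t_k$).
   Context: $f,g:\mathbb{R}^n\to\mathbb{R}$ are continuously differentiable, $f(\mathbf 0)=0$, $g(\mathbf x)\ne0$ for all $\mathbf x$; $\mathcal X\subset\mathbb{R}^n$ is a compact convex polytope containing $\mathbf 0$ in its interior. $\mathbf K\in\mathbb{R}^n$ makes $F=A_0-e_n\mathbf K^\top$ Hurwitz ($A_0$ the $n\times n$ matrix with ones on the superdiagonal and zeros elsewhere, $e_n$ last basis vector); $Q\succ0$, $P\succ0$ solves $F^\top P+PF=-Q$, $\gamma=4\lambda_{\max}(P)^3/\lambda_{\min}(Q)^2$, $\overline w\ge0$, $\overline e=\sqrt{\gamma\overline w^2/\lambda_{\min}(P)}$. $M_{\alpha,\beta}=\pi_{\rm PSD}\!\left(\begin{bmatrix}2\alpha\beta&\beta\\\beta&0\end{bmatrix}\right)$ ($\pi_{\rm PSD}$: projection onto the PSD cone, zeroing negative eigenvalues); $N_{\alpha,\beta}(\overline{\mathbf x})=\big(2\alpha\beta\overline e+\alpha|g(\overline{\mathbf x})^{-1}|+\beta\|\mathbf K\|_2\overline e,\ |g(\overline{\mathbf x})^{-1}|+\beta\overline e\big)^\top$; $\Gamma_{\alpha,\beta}(\overline{\mathbf x})=\overline e(\beta\overline e+|g(\overline{\mathbf x})^{-1}|)(\alpha+\|\mathbf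 K\|_2)$. Bézier trajectory: with $z_i(\tau)=\binom{p}{i}(\tau/T)^i(1-\tau/T)^{p-i}$, a Bézier curve of order $p$ is $r=\boldsymbol\xi_0^\top\mathbf z$; with $S\in\mathbb{R}^{p\times(p+1)}$ ($S_{ii}=-p$, $S_{i,i+1}=p$), $R\in\mathbb{R}^{(p+1)\times p}$ ($R_{ii}=(p+1-i)/p$, $R_{i+1,i}=i/p$), other entries zero, $H=S^\top R^\top$, one has $r^{(j)}=\boldsymbol\xi_j^\top\mathbf z$ with $\boldsymbol\xi_j=T^{-j}(H^\top)^j\boldsymbol\xi_0$. For $k=0,\dots,N-1$, $r_k$ is the unique order-$(2n-1)$ Bézier curve with $r_k^{(j-1)}(0)=x_k^j$, $r_k^{(j-1)}(T)=x_{k+1}^j$, $j=1,\dots,n$; its control vectors are $(\boldsymbol\xi_k)_j$ with entries $(\xi_k)_{j,i}$, $i=0,\dots,2n-1$; $(\boldsymbol\zeta_k)_i=((\xi_k)_{0,i},\dots,(\xi_k)_{n-1,i})^\top$; $\mathbf r_k=(r_k,\dots,r_k^{(n-1)})^\top$; $\mathbf x_d(t)=\mathbf r_k(t-t_k)$ on $[t_k,t_{k+1})$, $\mathbf x_d(\overline t)=\mathbf x_N$. *)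

From HB Require Import structures.
From mathcomp Require Import all_boot all_order all_algebra.
From mathcomp Require Import all_classical all_reals all_analysis.
From mathcomp Require Import complex.
Set Implicit Arguments. Unset Strict Implicit. Unset Printing Implicit Defensive.
Import Order.TTheory GRing.Theory Num.Theory.
Import numFieldNormedType.Exports.
Local Open Scope classical_set_scope.
Local Open Scope ring_scope.

Section Defs.
Variable R : realType.

Definition norm2 (a b : nat) (v : 'M[R]_(a, b)) : R :=
  Num.sqrt (\sum_(i < a) \sum_(j < b) v i j ^+ 2).

Definition vec2 (a b : R) : 'cV[R]_2 :=
  \col_(i < 2) (if i == ord0 then a else b).

Definition mat2 (a b c d : R) : 'M[R]_2 :=
  \matrix_(i < 2, j < 2)
    (if i == ord0 then (if j == ord0 then a else b)
                  else (if j == ord0 then c else d)).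

(* B = pi_PSD(A): for a symmetric A = U diag(d) U^T with U orthogonal,
   B = U diag(max(d,0)) U^T  (negative eigenvalues zeroed) *)
Definition psd_proj (m : nat) (A B : 'M[R]_m) : Prop :=
  exists (U : 'M[R]_m) (d : 'rV[R]_m),
    U^T *m U = 1%:M /\
    A = U *m diag_mx d *m U^T /\
    B = U *m diag_mx (map_mx (fun x => Num.max x 0) d) *m U^T.

Definition posdef (m : nat) (A : 'M[R]_m) : Prop :=
  A^T = A /\ forall x : 'cV[R]_m, x != 0 -> 0 < (x^T *m A *m x) 0 0.

Definition lambda_max (m : nat) (A : 'M[R]_m) : R := sup [set a | eigenvalue A a].
Definition lambda_min (m : nat) (A : 'M[R]_m) : R := inf [set a | eigenvalue A a].

Definition hurwitz (m : nat) (F : 'M[R]_m) : Prop :=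
  forall z : R[i], eigenvalue (map_mx (fun x : R => (x%:C)%C) F) z -> complex.Re z < 0.

Definition A0 (n : nat) : 'M[R]_n := \matrix_(i < n, j < n) (j == i.+1 :> nat)%:R.
Definition e_last (n : nat) : 'cV[R]_n := \col_(i < n) (i == n.-1 :> nat)%:R.
Definition Fmat (n : nat) (K : 'cV[R]_n) : 'M[R]_n := A0 n - e_last n *m K^T.

Definition gammaP (n : nat) (P Q : 'M[R]_n) : R :=
  4 * lambda_max P ^+ 3 / lambda_min Q ^+ 2.
Definition ebar (n : nat) (P Q : 'M[R]_n) (wbar : R) : R :=
  Num.sqrt (gammaP P Q * wbar ^+ 2 / lambda_min P).

(* N_{alpha,beta}(xbar) and Gamma_{alpha,beta}(xbar), with g evaluated at xbar *)
Definition Nab (n : nat) (alpha beta eb : R) (K : 'cV[R]_n) (gx : R) : 'cV[R]_2 :=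
  vec2 (2 * alpha * beta * eb + alpha * `|gx^-1| + beta * norm2 K * eb)
       (`|gx^-1| + beta * eb).
Definition Gab (n : nat) (alpha beta eb : R) (K : 'cV[R]_n) (gx : R) : R :=
  eb * (beta * eb + `|gx^-1|) * (alpha + norm2 K).

Definition qcost (M : 'M[R]_2) (Nv : 'cV[R]_2) (G : R) (s : 'cV[R]_2) : R :=
  2^-1 * (s^T *m M *m s) 0 0 + (Nv^T *m s) 0 0 + G.

Definition C1 (n : nat) (f : 'rV[R]_n -> R) : Prop :=
  (forall x, differentiable f x) /\ (forall v : 'rV[R]_n, continuous ('D_v f)).

Definition polytope (n : nat) (X : set 'rV[R]_n) : Prop :=
  exists (m : nat) (V : 'I_m -> 'rV[R]_n),
    X = [set x | exists w : 'I_m -> R, (forall i, 0 <= w i) /\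
                 \sum_(i < m) w i = 1 /\ x = \sum_(i < m) w i *: V i].

Definition bp (n : nat) : nat := (2 * n).-1.

Definition bern (p : nat) (T tau : R) : 'cV[R]_p.+1 :=
  \col_(i < p.+1) ('C(p, i)%:R * (tau / T) ^+ i * (1 - tau / T) ^+ (p - i)).

(* S in R^{p x (p+1)}, R in R^{(p+1) x p} (0-based indices), H = S^T R^T *)
Definition Smat (p : nat) : 'M[R]_(p, p.+1) :=
  \matrix_(i < p, j < p.+1)
    (if (j == i :> nat) then - p%:R else if (j == i.+1 :> nat) then p%:R else 0).
Definition Rmat (p : nat) : 'M[R]_(p.+1, p) :=
  \matrix_(i < p.+1, j < p)
    (if (i == j :> nat) then (p - j)%:R / p%:R
     else if (i == j.+1 :> nat) then (j.+1)%:R / p%:R else 0).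
Definition Hmat (p : nat) : 'M[R]_p.+1 := (Smat p)^T *m (Rmat p)^T.

Definition bctrl (p : nat) (T : R) (xi0 : 'cV[R]_p.+1) (j : nat) : 'cV[R]_p.+1 :=
  T ^- j *: (((Hmat p)^T ^+ j) *m xi0).

Definition bderiv (p : nat) (T : R) (xi0 : 'cV[R]_p.+1) (j : nat) (tau : R) : R :=
  ((bctrl T xi0 j)^T *m bern p T tau) 0 0.

Definition zeta (n : nat) (T : R) (xi0 : 'cV[R]_(bp n).+1) (i : 'I_(bp n).+1) : 'rV[R]_n :=
  \row_(j < n) bctrl T xi0 j i 0.

Definition bvec (n : nat) (T : R) (xi0 : 'cV[R]_(bp n).+1) (tau : R) : 'rV[R]_n :=
  \row_(j < n) bderiv T xi0 j tau.

End Defs.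

From HB Require Import structures.
From mathcomp Require Import all_boot all_order all_algebra.
From mathcomp Require Import all_classical all_reals all_analysis.
From mathcomp Require Import complex.
From mathcomp Require Import ring lra.
Set Implicit Arguments. Unset Strict Implicit. Unset Printing Implicit Defensive.
Import Order.TTheory GRing.Theory Num.Theory.
Import numFieldNormedType.Exports.
Local Open Scope classical_set_scope.
Local Open Scope ring_scope.

(* On [0, T] the Bernstein polynomials are nonnegative and sum to one, so
   r_k^(j)(tau) is a convex combination of the control points (xi_k)_j.
   Hence the vector (x_d(t), r_k^(n)(t - t_k)) stays within the distances
   s_k of (xbar_k, f xbar_k) that bound all control points.  The projection
   M of [[2 alpha beta, beta], [beta, 0]] onto the PSD cone has nonnegative
   entries and N_{alpha,beta} is nonnegative, so the cost is nondecreasing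
   on the nonnegative orthant and the bound at s_k transfers to sigma(t). *)

Section Bernstein.
Variables (R : realType) (p : nat) (T : R).

Lemma bern_ge0 tau : 0 < T -> 0 <= tau <= T -> forall i, 0 <= bern p T tau i 0.
Proof.
move=> T_gt0 /andP[tau_ge0 tau_leT] i; rewrite mxE.
have u_ge0 : 0 <= tau / T by rewrite divr_ge0 // ltW.
have v_ge0 : 0 <= 1 - tau / T by rewrite subr_ge0 ler_pdivrMr // mul1r.
by rewrite !mulr_ge0 ?exprn_ge0 ?ler0n.
Qed.

Lemma sum_bern tau : \sum_(i < p.+1) bern p T tau i 0 = 1.
Proof.
have <- : (1 - tau / T + tau / T) ^+ p = 1 by rewrite subrK expr1n.
by rewrite exprDn; apply: eq_bigr => i _; rewrite mxE -mulr_natl; ring.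
Qed.

Lemma bderivE xi0 j tau :
  bderiv T xi0 j tau = \sum_i bern p T tau i 0 * bctrl T xi0 j i 0.
Proof. by rewrite /bderiv mxE; apply: eq_bigr => i _; rewrite mxE mulrC. Qed.

End Bernstein.

Lemma bvecE (R : realType) n (T : R) xi0 tau :
  bvec T xi0 tau = \sum_i bern (bp n) T tau i 0 *: zeta T xi0 i.
Proof.
apply/matrixP => i j; rewrite summxE !mxE bderivE.
by apply: eq_bigr => l _; rewrite !mxE.
Qed.

Section ConvexCombination.
Variables (R : realType) (m : nat) (w : 'I_m -> R).
Hypotheses (w_ge0 : forall i, 0 <= w i) (sum_w : \sum_i w i = 1).

Lemma sqr_comb_le (a : 'I_m -> R) :
  (\sum_i w i * a i) ^+ 2 <= \sum_i w i * a i ^+ 2.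
Proof.
set mu := \sum_i w i * a i.
have var_ge0 : 0 <= \sum_i w i * (a i - mu) ^+ 2.
  by apply: sumr_ge0 => i _; rewrite mulr_ge0 ?sqr_ge0.
have varE : \sum_i w i * (a i - mu) ^+ 2 =
    \sum_i w i * a i ^+ 2 - 2 * mu * \sum_i w i * a i + mu ^+ 2 * \sum_i w i.
  rewrite (eq_bigr (fun i => w i * a i ^+ 2 - 2 * mu * (w i * a i) + mu ^+ 2 * w i)).
    by rewrite big_split sumrB /= -!mulr_sumr.
  by move=> i _; rewrite /mu; ring.
rewrite varE sum_w -/mu in var_ge0; nra.
Qed.

Lemma comb_subr (a : 'I_m -> R) y :
  \sum_i w i * a i - y = \sum_i w i * (a i - y).
Proof.
under [RHS]eq_bigr do rewrite mulrBr.
by rewrite sumrB -mulr_suml sum_w mul1r.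
Qed.

Lemma dist_comb_le (c : 'I_m -> R) y s :
  (forall i, `|c i - y| <= s) -> `|\sum_i w i * c i - y| <= s.
Proof.
move=> c_near; rewrite comb_subr; apply: (le_trans (ler_norm_sum _ _ _)).
apply: (@le_trans _ _ (\sum_i w i * s)); last by rewrite -mulr_suml sum_w mul1r.
by apply: ler_sum => i _; rewrite normrM ger0_norm // ler_wpM2l.
Qed.

Lemma norm2_le a b (v : 'M[R]_(a, b)) s : 0 <= s ->
  (norm2 v <= s) = (\sum_i \sum_j v i j ^+ 2 <= s ^+ 2).
Proof.
by move=> s_ge0; rewrite /norm2 -{1}(ger0_norm s_ge0) -sqrtr_sqr ler_sqrt ?sqr_ge0.
Qed.

Lemma norm2_comb_le a b (c : 'I_m -> 'M[R]_(a, b)) y s : 0 <= s ->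
  (forall i, norm2 (c i - y) <= s) -> norm2 (\sum_i w i *: c i - y) <= s.
Proof.
move=> s_ge0 c_near; rewrite norm2_le //.
apply: (@le_trans _ _ (\sum_k \sum_l \sum_i w i * (c i k l - y k l) ^+ 2)).
  apply: ler_sum => k _; apply: ler_sum => l _.
  rewrite !mxE summxE (eq_bigr (fun i => w i * c i k l)) => [|i _]; last by rewrite !mxE.
  by rewrite comb_subr sqr_comb_le.
under eq_bigr do rewrite exchange_big /=.
rewrite exchange_big /=; under eq_bigr do under eq_bigr do rewrite -mulr_sumr.
under eq_bigr do rewrite -mulr_sumr.
apply: (@le_trans _ _ (\sum_i w i * s ^+ 2)); last by rewrite -mulr_suml sum_w mul1r.
apply: ler_sum => i _; rewrite ler_wpM2l //.
by move: (c_near i); rewrite norm2_le //; under eq_bigr do under eq_bigr do rewrite !mxE.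
Qed.

End ConvexCombination.

Lemma diag_conj_ge0 (R : realType) m (U : 'M[R]_m) (e : 'rV[R]_m) :
  (forall j, 0 <= e 0 j) -> forall i, 0 <= (U *m diag_mx e *m U^T) i i.
Proof.
move=> e_ge0 i; rewrite mul_mx_diag mxE; apply: sumr_ge0 => k _; rewrite !mxE.
by rewrite mulrAC -expr2 mulr_ge0 ?sqr_ge0.
Qed.

Section PsdProjection.
Variables (R : realType) (m : nat) (A B : 'M[R]_m).
Hypothesis AB : psd_proj A B.

Lemma psd_proj_sym : B^T = B.
Proof.
by case: AB => U [d [_ [_ ->]]]; rewrite !trmx_mul trmxK tr_diag_mx mulmxA.
Qed.

(* In the eigenbasis U of A, B and B - A are diagonal with entries max(d, 0)
   and max(-d, 0): both nonnegative, with disjoint supports. *)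
Lemma psd_proj_decomp :
  [/\ forall i, 0 <= B i i, forall i, 0 <= (B - A) i i & B *m (B - A) = 0].
Proof.
case: AB => U [d [UU [-> ->]]]; set dp := map_mx _ d.
set dn := \row_j (Num.max (d 0 j) 0 - d 0 j).
have BAE : U *m diag_mx dp *m U^T - U *m diag_mx d *m U^T = U *m diag_mx dn *m U^T.
  rewrite -mulmxBl -mulmxBr; congr (_ *m _ *m _).
  by apply/matrixP => i j; rewrite !mxE mulrnBl.
rewrite BAE; split.
- by apply: diag_conj_ge0 => j; rewrite mxE le_max lexx orbT.
- by apply: diag_conj_ge0 => j; rewrite mxE subr_ge0 le_max lexx.
rewrite !mulmxA -(mulmxA _ U^T U) UU mulmx1 -(mulmxA U) mulmx_diag.
have -> : \row_j (dp 0 j * dn 0 j) = 0.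
  apply/matrixP => i j; rewrite !mxE.
  by case: (leP 0 (d 0 j)) => d_sgn; rewrite ?subrr ?mulr0 ?mul0r.
by rewrite raddf0 mulmx0 mul0mx.
Qed.

End PsdProjection.

Lemma psd_proj2_ge0 (R : realType) (A B : 'M[R]_2) :
  psd_proj A B -> 0 <= A (lift ord0 ord0) ord0 -> forall i j, 0 <= B i j.
Proof.
move=> AB A10_ge0; have Bsym := psd_proj_sym AB.
have [Bii_ge0 BAii_ge0 BBA0] := psd_proj_decomp AB.
have B10E : B (lift ord0 ord0) ord0 = B ord0 (lift ord0 ord0).
  by rewrite -[in RHS]Bsym mxE.
(* Entry (0, 0) of B (B - A) = 0 reads B00 (B00 - A00) + B01 (B01 - A10) = 0. *)
have B01_ge0 : 0 <= B ord0 (lift ord0 ord0).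
  move: (congr1 (fun C : 'M[R]_2 => C ord0 ord0) BBA0) (BAii_ge0 ord0) (Bii_ge0 ord0).
  rewrite /= !mxE !big_ord_recl big_ord0 !mxE /= B10E; nra.
by move=> i j; case: (unliftP ord0 i) => [i'|] ->; case: (unliftP ord0 j) => [j'|] ->;
  rewrite ?ord1 ?B10E.
Qed.

Section CostMonotone.
Variable R : realType.

Lemma nonneg_mx_row_le m n (M : 'M[R]_(m, n)) (s t : 'cV[R]_m) :
  (forall i j, 0 <= M i j) -> (forall i, 0 <= t i 0 <= s i 0) ->
  forall j, 0 <= (t^T *m M) 0 j <= (s^T *m M) 0 j.
Proof.
move=> M_ge0 ts j; rewrite !mxE; apply/andP; split.
  by apply: sumr_ge0 => i _; rewrite mxE mulr_ge0 //; case/andP: (ts i).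
by apply: ler_sum => i _; rewrite !mxE ler_wpM2r //; case/andP: (ts i).
Qed.

Lemma quad_form_le m (M : 'M[R]_m) (s t : 'cV[R]_m) :
  (forall i j, 0 <= M i j) -> (forall i, 0 <= t i 0 <= s i 0) ->
  (t^T *m M *m t) 0 0 <= (s^T *m M *m s) 0 0.
Proof.
move=> M_ge0 ts; rewrite [X in X <= _]mxE [X in _ <= X]mxE.
apply: ler_sum => j _; have /andP[tM_ge0 tM_le] := nonneg_mx_row_le M_ge0 ts j.
by have /andP[tj_ge0 tj_le] := ts j; rewrite ler_pM.
Qed.

Lemma qcost_le (M : 'M[R]_2) (Nv : 'cV[R]_2) G (s t : 'cV[R]_2) :
  (forall i j, 0 <= M i j) -> (forall i, 0 <= Nv i 0) ->
  (forall i, 0 <= t i 0 <= s i 0) -> qcost M Nv G t <= qcost M Nv G s.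
Proof.
move=> M_ge0 Nv_ge0 ts; rewrite /qcost lerD2r lerD ?ler_wpM2l ?quad_form_le //.
rewrite !mxE; apply: ler_sum => i _; rewrite !mxE ler_wpM2l //.
by case/andP: (ts i).
Qed.

Lemma Nab_ge0 n alpha beta eb (K : 'cV[R]_n) gx :
  0 <= alpha -> 0 <= beta -> 0 <= eb -> forall i, 0 <= Nab alpha beta eb K gx i 0.
Proof.
move=> a_ge0 b_ge0 eb_ge0 i; have K_ge0 : 0 <= norm2 K by exact: sqrtr_ge0.
by rewrite !mxE; case: ifP => _; rewrite ?addr_ge0 ?mulr_ge0.
Qed.

End CostMonotone.
Theorem lemma6 (R : realType) (n : nat) (hn : (0 < n)%N)
  (f g : 'rV[R]_n -> R) (hf : C1 f) (hg : C1 g) (f0 : f 0 = 0)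
  (gnz : forall x, g x != 0)
  (X : set 'rV[R]_n) (hX : polytope X) (hX0 : (X°) 0)
  (K : 'cV[R]_n) (hK : hurwitz (Fmat K))
  (Q P : 'M[R]_n) (hQ : posdef Q) (hP : posdef P)
  (hLyap : (Fmat K)^T *m P + P *m Fmat K = - Q)
  (wbar : R) (hw : 0 <= wbar)
  (N : nat) (T tlow : R) (hT : 0 < T) (htlow : 0 <= tlow)
  (x : nat -> 'rV[R]_n) (xi0 : nat -> 'cV[R]_(bp n).+1)
  (hxi : forall k : nat, (k < N)%N -> forall j : 'I_n,
      bderiv T (xi0 k) j 0 = x k 0 j /\ bderiv T (xi0 k) j T = x k.+1 0 j)
  (alpha beta umax : R) (ha : 0 <= alpha) (hb : 0 <= beta) (hu : 0 < umax)
  (M : 'M[R]_2) (hM : psd_proj (mat2 (2 * alpha * beta) beta beta 0) M)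
  (xbar : nat -> 'rV[R]_n) (hxbar : forall k, (k < N)%N -> X (xbar k))
  (hs : forall k : nat, (k < N)%N -> exists s : 'cV[R]_2,
      (forall i, 0 <= s i 0) /\
      (forall i : 'I_(bp n).+1,
         norm2 (zeta T (xi0 k) i - xbar k) <= s ord0 0 /\
         `|bctrl T (xi0 k) n i 0 - f (xbar k)| <= s (lift ord0 ord0) 0) /\
      qcost M (Nab alpha beta (ebar P Q wbar) K (g (xbar k)))
              (Gab alpha beta (ebar P Q wbar) K (g (xbar k))) s <= umax) :
  forall k : nat, (k < N)%N -> forall t : R,
    tlow + k%:R * T <= t < tlow + k.+1%:R * T ->
    qcost M (Nab alpha beta (ebar P Q wbar) K (g (xbar k)))
            (Gab alpha beta (ebar P Q wbar) K (g (xbar k)))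
          (vec2 (norm2 (bvec T (xi0 k) (t - (tlow + k%:R * T)) - xbar k))
                `|bderiv T (xi0 k) n (t - (tlow + k%:R * T)) - f (xbar k)|)
      <= umax.
Proof.
move=> k ltkN t /andP[t_ge t_lt].
set tau := t - (tlow + k%:R * T); set z := bern (bp n) T tau.
have tau_in : 0 <= tau <= T.
  by move: t_lt; rewrite -addn1 natrD mulrDl mul1r /tau => ?; apply/andP; split; lra.
have z_ge0 : forall i, 0 <= z i 0 := bern_ge0 hT tau_in.
have sum_z : \sum_i z i 0 = 1 := sum_bern _ _ _.
have [s [s_ge0 [s_bounds cost_s]]] := hs k ltkN.
have M_ge0 : forall i j, 0 <= M i j.
  by apply: psd_proj2_ge0 hM _; rewrite !mxE.
apply: le_trans cost_s; apply: qcost_le => //.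
  by apply: Nab_ge0 => //; exact: sqrtr_ge0.
move=> i; case: (unliftP ord0 i) => [i'|] ->; rewrite !mxE ?ord1 /=.
  rewrite normr_ge0 bderivE dist_comb_le // => j.
  by case: (s_bounds j).
rewrite sqrtr_ge0 bvecE norm2_comb_le // => j.
by case: (s_bounds j).
Qed.
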